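(* Let $\langle X_0,d_0\rangle$ and $\langle X_1,d_1\rangle$ be metric spaces. Then $\langle X_0,d_0\rangle$ and $\langle X_1,d_1\rangle$ have isometrically isomorphic completions if and only if there exist a cardinal $\eta\leq|X_0|+|X_1|$, a metric $d$ on $\eta$, and, for each $e\in\{0,1\}$, a dense isometry $\iota_e:\langle X_e,d_e\rangle\to\langle\eta,d\rangle$.
   Context: An isometry between metric spaces is a distance-preserving map (not necessarily onto); an isometrical isomorphism is an onto isometry; a dense isometry $\iota:X\to X'$ is an isometry with $\iota[X]$ dense in $X'$. A completion of a metric space $\langle X,d\rangle$ is a triple $\langle X^*,d^*,\iota\rangle$ with $\langle X^*,d^*\rangle$ complete and $\iota:\langle X,d\rangle\to\langle X^*,d^*\rangle$ a dense isometry. *)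

From Stdlib Require Import Reals.
Open Scope R_scope.

Definition is_metric (X : Type) (d : X -> X -> R) : Prop :=
  (forall x y, 0 <= d x y) /\
  (forall x y, d x y = 0 <-> x = y) /\
  (forall x y, d x y = d y x) /\
  (forall x y z, d x z <= d x y + d y z).

Definition cauchy_seq (X : Type) (d : X -> X -> R) (u : nat -> X) : Prop :=
  forall eps, 0 < eps -> exists N, forall m n, (N <= m)%nat -> (N <= n)%nat ->
    d (u m) (u n) < eps.

Definition converges_to (X : Type) (d : X -> X -> R) (u : nat -> X) (l : X) : Prop :=
  forall eps, 0 < eps -> exists N, forall n, (N <= n)%nat -> d (u n) l < eps.

Definition complete_metric (X : Type) (d : X -> X -> R) : Prop :=
  is_metric X d /\
  forall u : nat -> X, cauchy_seq X d u -> exists l, converges_to X d u l.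

Definition isometry (X Y : Type) (dX : X -> X -> R) (dY : Y -> Y -> R)
  (f : X -> Y) : Prop :=
  forall x y, dY (f x) (f y) = dX x y.

Definition isometric_iso (X Y : Type) (dX : X -> X -> R) (dY : Y -> Y -> R)
  (f : X -> Y) : Prop :=
  isometry X Y dX dY f /\ (forall y, exists x, f x = y).

Definition dense_isometry (X Y : Type) (dX : X -> X -> R) (dY : Y -> Y -> R)
  (f : X -> Y) : Prop :=
  isometry X Y dX dY f /\
  (forall y eps, 0 < eps -> exists x, dY (f x) y < eps).

Definition completion (X Y : Type) (dX : X -> X -> R) (dY : Y -> Y -> R)
  (i : X -> Y) : Prop :=
  complete_metric Y dY /\ dense_isometry X Y dX dY i.

Definition card_le_sum (Y X0 X1 : Type) : Prop :=
  exists f : Y -> X0 + X1, forall a b, f a = f b -> a = b.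

(* If the completions of X0 and X1 are identified with one complete space Y, the
   union of the images of X0 and X1 in Y has at most |X0| + |X1| points and both
   spaces are dense in it.  Conversely, if X0 and X1 embed densely into a common
   space eta, then the Cauchy completion of eta is a completion of each of them,
   the identity being the required isometric isomorphism. *)

From Stdlib Require Import Reals Lra Lia ClassicalEpsilon ProofIrrelevance
  FunctionalExtensionality PropExtensionality.
Open Scope R_scope.

Lemma Un_cv_const (c : R) : Un_cv (fun _ => c) c.
Proof.
  intros eps heps; exists O; intros n _.
  unfold Rdist; rewrite Rminus_diag, Rabs_R0; exact heps.
Qed.

Lemma Un_cv_close (a b : nat -> R) (l : R) :
  Un_cv a l -> Un_cv (fun n => a n - b n) 0 -> Un_cv b l.
Proof.
  intros ha hab; rewrite <- (Rminus_0_r l).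
  apply (Un_cv_ext (fun n => a n - (a n - b n))); [intro n; ring|].
  now apply CV_minus.
Qed.

Lemma Un_cv_le_eventually (a : nat -> R) (l c : R) (N : nat) :
  Un_cv a l -> (forall n, (N <= n)%nat -> a n <= c) -> l <= c.
Proof.
  intros ha hc; destruct (Rle_or_lt l c) as [|hlt]; [assumption|].
  destruct (ha (l - c)) as [M hM]; [lra|].
  specialize (hM (max N M) ltac:(lia)); specialize (hc (max N M) ltac:(lia)).
  unfold Rdist in hM; apply Rabs_def2 in hM; lra.
Qed.

Lemma eventually_inv_succ_lt (eps : R) :
  0 < eps -> exists K, forall k, (K <= k)%nat -> / INR (S k) < eps.
Proof.
  intro heps; destruct (archimed_cor1 eps heps) as [K [hK hK0]].
  exists K; intros k hk; eapply Rle_lt_trans; [|exact hK].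
  apply Rinv_le_contravar; [apply lt_0_INR; lia | apply le_INR; lia].
Qed.

Section Metric.
Context {Z : Type} {d : Z -> Z -> R} (hd : is_metric Z d).

Lemma metric_ge0 x y : 0 <= d x y.
Proof. apply hd. Qed.

Lemma metric_eq0 x y : d x y = 0 -> x = y.
Proof. apply hd. Qed.

Lemma metric_xx x : d x x = 0.
Proof. now apply hd. Qed.

Lemma metric_sym x y : d x y = d y x.
Proof. apply hd. Qed.

Lemma metric_triangle x y z : d x z <= d x y + d y z.
Proof. apply hd. Qed.

Lemma metric_diff_le a b a' b' : Rabs (d a b - d a' b') <= d a a' + d b b'.
Proof.
  pose proof (metric_triangle a a' b); pose proof (metric_triangle a' b' b).
  pose proof (metric_triangle a' a b'); pose proof (metric_triangle a b b').
  rewrite (metric_sym b' b) in *; rewrite (metric_sym a' a) in *.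
  apply Rabs_le; lra.
Qed.

End Metric.

Lemma dense_isometry_comp (X Y W : Type) dX dY dW (f : X -> Y) (g : Y -> W) :
  is_metric W dW -> dense_isometry X Y dX dY f -> dense_isometry Y W dY dW g ->
  dense_isometry X W dX dW (fun x => g (f x)).
Proof.
  intros hW [hf df] [hg dg]; split.
  - intros x y; rewrite hg; apply hf.
  - intros w eps heps.
    destruct (dg w (eps / 2)) as [y hy]; [lra|].
    destruct (df y (eps / 2)) as [x hx]; [lra|].
    exists x; pose proof (metric_triangle hW (g (f x)) (g y) w).
    rewrite hg in *; lra.
Qed.

Lemma isometric_iso_dense (X Y : Type) dX dY (f : X -> Y) :
  is_metric Y dY -> isometric_iso X Y dX dY f -> dense_isometry X Y dX dY f.
Proof.
  intros hY [hf onto]; split; [exact hf|].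
  intros y eps heps; destruct (onto y) as [x <-].
  exists x; rewrite (metric_xx hY); exact heps.
Qed.

Definition sig_dist {Y : Type} (P : Y -> Prop) (dY : Y -> Y -> R)
  (a b : {y | P y}) : R :=
  dY (proj1_sig a) (proj1_sig b).

Lemma sig_eq {Y : Type} (P : Y -> Prop) (a b : {y | P y}) :
  proj1_sig a = proj1_sig b -> a = b.
Proof. destruct a, b; apply subset_eq_compat. Qed.

Lemma sig_dist_metric (Y : Type) (P : Y -> Prop) dY :
  is_metric Y dY -> is_metric {y | P y} (sig_dist P dY).
Proof.
  unfold sig_dist; intros hY; split; [|split; [|split]]; intros a b.
  - apply (metric_ge0 hY).
  - split; [intro h; apply sig_eq, (metric_eq0 hY), h | intros <-; apply (metric_xx hY)].
  - apply (metric_sym hY).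
  - intro c; apply (metric_triangle hY).
Qed.

Lemma dense_isometry_corestrict (X Y : Type) dX dY (P : Y -> Prop) (f : X -> Y)
  (hf : forall x, P (f x)) :
  dense_isometry X Y dX dY f ->
  dense_isometry X {y | P y} dX (sig_dist P dY) (fun x => exist P (f x) (hf x)).
Proof.
  intros [iso dense]; split; [exact iso|].
  intros [y hy] eps heps; exact (dense y eps heps).
Qed.

Lemma range_injects (S Y : Type) (f : S -> Y) :
  exists g : {y | exists s, f s = y} -> S, forall a b, g a = g b -> a = b.
Proof.
  exists (fun a => proj1_sig (constructive_indefinite_description
                              (fun s => f s = proj1_sig a) (proj2_sig a))).
  intros [y hy] [y' hy']; simpl.
  destruct (constructive_indefinite_description _ hy) as [s hs].
  destruct (constructive_indefinite_description _ hy') as [t ht].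
  simpl; intros <-; apply subset_eq_compat; congruence.
Qed.

Lemma complete_of_dense_isometry (X Y : Type) dX dY (f : X -> Y) :
  is_metric Y dY -> dense_isometry X Y dX dY f ->
  (forall u, cauchy_seq X dX u -> exists l, converges_to Y dY (fun n => f (u n)) l) ->
  complete_metric Y dY.
Proof.
  intros hY [hf dense] hconv; split; [exact hY|]; intros P hP.
  destruct (choice (fun k x => dY (f x) (P k) < / INR (S k))) as [z hz].
  { intro k; apply dense, Rinv_0_lt_compat, lt_0_INR; lia. }
  assert (z_cauchy : cauchy_seq X dX z).
  { intros eps heps.
    destruct (eventually_inv_succ_lt (eps / 3)) as [K hK]; [lra|].
    destruct (hP (eps / 3)) as [N hN]; [lra|].
    exists (max K N); intros m n hm hn; rewrite <- hf.
    pose proof (metric_triangle hY (f (z m)) (P m) (f (z n))).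
    pose proof (metric_triangle hY (P m) (P n) (f (z n))).
    pose proof (metric_sym hY (P n) (f (z n))).
    pose proof (hz m); pose proof (hz n).
    pose proof (hK m ltac:(lia)); pose proof (hK n ltac:(lia)).
    pose proof (hN m n ltac:(lia) ltac:(lia)); lra. }
  destruct (hconv z z_cauchy) as [l hl]; exists l; intros eps heps.
  destruct (eventually_inv_succ_lt (eps / 2)) as [K hK]; [lra|].
  destruct (hl (eps / 2)) as [N hN]; [lra|].
  exists (max K N); intros k hk.
  pose proof (metric_triangle hY (P k) (f (z k)) l).
  pose proof (metric_sym hY (P k) (f (z k))).
  pose proof (hz k); pose proof (hK k ltac:(lia)); pose proof (hN k ltac:(lia)); lra.
Qed.

Section CauchyCompletion.
Variables (Z : Type) (d : Z -> Z -> R).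
Hypothesis hd : is_metric Z d.

Definition seq_close (u v : nat -> Z) : Prop :=
  forall eps, 0 < eps -> exists N, forall n, (N <= n)%nat -> d (u n) (v n) < eps.

Lemma seq_close_refl u : seq_close u u.
Proof. intros eps heps; exists O; intros n _; rewrite (metric_xx hd); exact heps. Qed.

Lemma seq_close_sym u v : seq_close u v -> seq_close v u.
Proof.
  intros h eps heps; destruct (h eps heps) as [N hN].
  exists N; intros n hn; rewrite (metric_sym hd); auto.
Qed.

Lemma seq_close_trans u v w : seq_close u v -> seq_close v w -> seq_close u w.
Proof.
  intros huv hvw eps heps.
  destruct (huv (eps / 2)) as [N1 h1]; [lra|].
  destruct (hvw (eps / 2)) as [N2 h2]; [lra|].
  exists (max N1 N2); intros n hn.
  pose proof (h1 n ltac:(lia)); pose proof (h2 n ltac:(lia)).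
  pose proof (metric_triangle hd (u n) (v n) (w n)); lra.
Qed.

Lemma seq_close_class_eq u v : seq_close u v -> seq_close u = seq_close v.
Proof.
  intro huv; apply functional_extensionality; intro w.
  apply propositional_extensionality; split; intro h.
  - exact (seq_close_trans _ _ _ (seq_close_sym _ _ huv) h).
  - exact (seq_close_trans _ _ _ huv h).
Qed.

Lemma seq_close_of_Un_cv0 u v : Un_cv (fun n => d (u n) (v n)) 0 -> seq_close u v.
Proof.
  intros h eps heps; destruct (h eps heps) as [N hN]; exists N; intros n hn.
  specialize (hN n hn); unfold Rdist in hN; rewrite Rminus_0_r in hN.
  apply Rabs_def2 in hN; lra.
Qed.

Lemma Un_cv_dist_close u u' v v' l :
  seq_close u u' -> seq_close v v' ->
  Un_cv (fun n => d (u n) (v n)) l -> Un_cv (fun n => d (u' n) (v' n)) l.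
Proof.
  intros hu hv hl; apply (Un_cv_close _ _ _ hl); intros eps heps.
  destruct (hu (eps / 2)) as [N1 h1]; [lra|].
  destruct (hv (eps / 2)) as [N2 h2]; [lra|].
  exists (max N1 N2); intros n hn.
  pose proof (h1 n ltac:(lia)); pose proof (h2 n ltac:(lia)).
  pose proof (metric_diff_le hd (u n) (v n) (u' n) (v' n)).
  unfold Rdist; rewrite Rminus_0_r; lra.
Qed.

Lemma cauchy_dist_crit u v :
  cauchy_seq Z d u -> cauchy_seq Z d v -> Cauchy_crit (fun n => d (u n) (v n)).
Proof.
  intros hu hv eps heps.
  destruct (hu (eps / 2)) as [N1 h1]; [lra|].
  destruct (hv (eps / 2)) as [N2 h2]; [lra|].
  exists (max N1 N2); intros m n hm hn.
  pose proof (h1 m n ltac:(lia) ltac:(lia)); pose proof (h2 m n ltac:(lia) ltac:(lia)).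
  pose proof (metric_diff_le hd (u m) (v m) (u n) (v n)).
  unfold Rdist; lra.
Qed.

(* A point is an equivalence class of Cauchy sequences, kept as a predicate so
   that equal classes are equal points. *)
Definition cauchy_completion : Type :=
  {P : (nat -> Z) -> Prop | exists u, cauchy_seq Z d u /\ P = seq_close u}.

Lemma cauchy_completion_mem (P : cauchy_completion) :
  exists u, cauchy_seq Z d u /\ proj1_sig P u.
Proof.
  destruct (proj2_sig P) as [u [hu eP]].
  exists u; rewrite eP; split; [exact hu | apply seq_close_refl].
Qed.

Definition cdist (P Q : cauchy_completion) : R :=
  epsilon (inhabits 0) (fun l => forall u v, proj1_sig P u -> proj1_sig Q v ->
    Un_cv (fun n => d (u n) (v n)) l).

Lemma cdist_spec (P Q : cauchy_completion) :
  forall u v, proj1_sig P u -> proj1_sig Q v ->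
  Un_cv (fun n => d (u n) (v n)) (cdist P Q).
Proof.
  unfold cdist; apply epsilon_spec.
  destruct (proj2_sig P) as [u0 [hu0 eP]], (proj2_sig Q) as [v0 [hv0 eQ]].
  destruct (R_complete _ (cauchy_dist_crit u0 v0 hu0 hv0)) as [l hl].
  exists l; rewrite eP, eQ; intros u v hu hv.
  exact (Un_cv_dist_close _ _ _ _ _ hu hv hl).
Qed.

Lemma cdist_eq0 (P Q : cauchy_completion) : cdist P Q = 0 -> P = Q.
Proof.
  intro h0; apply sig_eq.
  destruct (proj2_sig P) as [u [_ eP]], (proj2_sig Q) as [v [_ eQ]].
  assert (huP : proj1_sig P u) by (rewrite eP; apply seq_close_refl).
  assert (hvQ : proj1_sig Q v) by (rewrite eQ; apply seq_close_refl).
  pose proof (cdist_spec P Q u v huP hvQ) as h; rewrite h0 in h.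
  rewrite eP, eQ; exact (seq_close_class_eq _ _ (seq_close_of_Un_cv0 _ _ h)).
Qed.

Lemma cdist_metric : is_metric cauchy_completion cdist.
Proof.
  split; [|split; [|split]].
  - intros P Q.
    destruct (cauchy_completion_mem P) as [u [_ hu]], (cauchy_completion_mem Q) as [v [_ hv]].
    apply (Rle_cv_lim (fun n => metric_ge0 hd (u n) (v n)) (Un_cv_const 0)).
    exact (cdist_spec P Q u v hu hv).
  - intros P Q; split; [apply cdist_eq0|intros <-].
    destruct (cauchy_completion_mem P) as [u [_ hu]].
    apply (UL_sequence _ _ _ (cdist_spec P P u u hu hu)).
    apply (Un_cv_ext (fun _ => 0)); [intro n; now rewrite (metric_xx hd)|].
    apply Un_cv_const.
  - intros P Q.
    destruct (cauchy_completion_mem P) as [u [_ hu]], (cauchy_completion_mem Q) as [v [_ hv]].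
    apply (UL_sequence _ _ _ (cdist_spec P Q u v hu hv)).
    apply (Un_cv_ext (fun n => d (v n) (u n))); [intro n; apply (metric_sym hd)|].
    exact (cdist_spec Q P v u hv hu).
  - intros P Q W.
    destruct (cauchy_completion_mem P) as [u [_ hu]], (cauchy_completion_mem Q) as [v [_ hv]],
      (cauchy_completion_mem W) as [w [_ hw]].
    apply (Rle_cv_lim (fun n => metric_triangle hd (u n) (v n) (w n))
      (cdist_spec P W u w hu hw)).
    exact (CV_plus _ _ _ _ (cdist_spec P Q u v hu hv) (cdist_spec Q W v w hv hw)).
Qed.

Definition class_of (u : nat -> Z) (hu : cauchy_seq Z d u) : cauchy_completion :=
  exist _ (seq_close u) (ex_intro _ u (conj hu eq_refl)).

Lemma class_of_mem u hu : proj1_sig (class_of u hu) u.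
Proof. apply seq_close_refl. Qed.

Lemma cauchy_const x : cauchy_seq Z d (fun _ => x).
Proof. intros eps heps; exists O; intros; rewrite (metric_xx hd); exact heps. Qed.

Definition embed (x : Z) : cauchy_completion := class_of (fun _ => x) (cauchy_const x).

Lemma embed_isometry : isometry Z cauchy_completion d cdist embed.
Proof.
  intros x y; apply (UL_sequence (fun _ => d x y)); [|apply Un_cv_const].
  apply cdist_spec; apply class_of_mem.
Qed.

Lemma cdist_embed_le x (P : cauchy_completion) u N r :
  proj1_sig P u -> (forall n, (N <= n)%nat -> d x (u n) <= r) -> cdist (embed x) P <= r.
Proof.
  intros hu; apply Un_cv_le_eventually.
  exact (cdist_spec (embed x) P (fun _ => x) u (class_of_mem _ _) hu).
Qed.

Lemma embed_dense : dense_isometry Z cauchy_completion d cdist embed.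
Proof.
  split; [exact embed_isometry|]; intros P eps heps.
  destruct (cauchy_completion_mem P) as [u [hu huP]].
  destruct (hu (eps / 2)) as [N hN]; [lra|].
  exists (u N); apply Rle_lt_trans with (eps / 2); [|lra].
  apply (cdist_embed_le _ _ _ N _ huP); intros n hn; left; apply hN; lia.
Qed.

Lemma embed_cauchy_converges u (hu : cauchy_seq Z d u) :
  converges_to cauchy_completion cdist (fun n => embed (u n)) (class_of u hu).
Proof.
  intros eps heps; destruct (hu (eps / 2)) as [N hN]; [lra|].
  exists N; intros k hk; apply Rle_lt_trans with (eps / 2); [|lra].
  apply (cdist_embed_le _ _ _ N _ (class_of_mem u hu)); intros n hn; left; apply hN; lia.
Qed.

Lemma cauchy_completion_complete : complete_metric cauchy_completion cdist.
Proof.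
  apply (complete_of_dense_isometry _ _ _ _ _ cdist_metric embed_dense).
  intros u hu; exists (class_of u hu); apply embed_cauchy_converges.
Qed.

End CauchyCompletion.

Theorem lemma3p3 (X0 X1 : Type) (d0 : X0 -> X0 -> R) (d1 : X1 -> X1 -> R)
  (hd0 : is_metric X0 d0) (hd1 : is_metric X1 d1) :
  (exists (Y0 : Type) (e0 : Y0 -> Y0 -> R) (j0 : X0 -> Y0)
          (Y1 : Type) (e1 : Y1 -> Y1 -> R) (j1 : X1 -> Y1) (phi : Y0 -> Y1),
      completion X0 Y0 d0 e0 j0 /\ completion X1 Y1 d1 e1 j1 /\
      isometric_iso Y0 Y1 e0 e1 phi)
  <->
  (exists (eta : Type) (d : eta -> eta -> R) (i0 : X0 -> eta) (i1 : X1 -> eta),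
      card_le_sum eta X0 X1 /\ is_metric eta d /\
      dense_isometry X0 eta d0 d i0 /\ dense_isometry X1 eta d1 d i1).
Proof.
  split.
  - intros (Y0 & e0 & j0 & Y1 & e1 & j1 & phi & [[he0 _] hj0] & [[he1 _] hj1] & hphi).
    set (f := fun s : X0 + X1 => match s with inl x => phi (j0 x) | inr x => j1 x end).
    set (P := fun y => exists s, f s = y).
    exists {y | P y}, (sig_dist P e1),
      (fun x => exist P (f (inl x)) (ex_intro _ (inl x) eq_refl)),
      (fun x => exist P (f (inr x)) (ex_intro _ (inr x) eq_refl)).
    split; [|split; [|split]].
    + apply range_injects.
    + exact (sig_dist_metric _ _ _ he1).
    + apply (dense_isometry_corestrict _ _ _ _ P (fun x => phi (j0 x))).
      exact (dense_isometry_comp _ _ _ _ _ _ _ _ he1 hj0 (isometric_iso_dense _ _ _ _ _ he1 hphi)).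
    + exact (dense_isometry_corestrict _ _ _ _ P j1 _ hj1).
  - intros (eta & d & i0 & i1 & _ & hd & hi0 & hi1).
    pose proof (cauchy_completion_complete eta d hd) as hC.
    exists (cauchy_completion eta d), (cdist eta d), (fun x => embed eta d hd (i0 x)),
      (cauchy_completion eta d), (cdist eta d), (fun x => embed eta d hd (i1 x)), (fun P => P).
    split; [|split].
    + split; [exact hC|].
      exact (dense_isometry_comp _ _ _ _ _ _ _ _ (proj1 hC) hi0 (embed_dense eta d hd)).
    + split; [exact hC|].
      exact (dense_isometry_comp _ _ _ _ _ _ _ _ (proj1 hC) hi1 (embed_dense eta d hd)).
    + split; [intros P Q; reflexivity | intro P; exists P; reflexivity].
Qed.
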